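(* (1) In every model of $\mathsf{Md}_\bot$ satisfying $\mathsf{NVL}$: for all $x,y$, if $x\cdot y=\bot$ and $x\neq\bot$ then $y=\bot$. (2) In every model of $\mathsf{Md}_\bot$ satisfying $\mathsf{NVL}$: for all $x$, if $x^{-1}\neq\bot$ then $0\cdot x=0$. (3) Every model of $\mathsf{Md}_\bot$ satisfying $\mathsf{NVL}$ and $\mathsf{AVL}$ satisfies $\mathsf{CIL}$. (4) Every model of $\mathsf{Md}_\bot$ satisfying $\mathsf{CIL}$ satisfies $\mathsf{NVL}$. (5) Every model of $\mathsf{Md}_\bot$ satisfying $\mathsf{CIL}$ satisfies $\mathsf{AVL}$.
   Context: The signature has one sort, constants $0,1,\bot$, binary operations $+,\cdot$ and unary operations $-$ and $(\,\cdot\,)^{-1}$. $\mathsf{Md}_\bot$ is the set of equations (variables universally quantified): $(x+y)+z=x+(y+z)$; $x+y=y+x$; $x+0=x$; $x+(-x)=0\cdot x$; $(x\cdot y)\cdot z=x\cdot(y\cdot z)$; $x\cdot y=y\cdot x$; $1\cdot x=x$; $x\cdot(y+z)=x\cdot y+x\cdot z$; $-(-x)=x$; $0\cdot(x\cdot x)=0\cdot x$; $(x^{-1})^{-1}=x+0\cdot x^{-1}$; $x\cdot x^{-1}=1+0\cdot x^{-1}$; $(x\cdot y)^{-1}=x^{-1}\cdot y^{-1}$; $1^{-1}=1$; $0^{-1}=\bot$; $x+\bot=\bot$; $x\cdot\bot=\bot$. Normal Value Law $\mathsf{NVL}$: $\forall x\,(x\neq\bot\rightarrow 0\cdot x=0)$.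 Additional Value Law $\mathsf{AVL}$: $\forall x\,(x^{-1}=\bot\rightarrow 0\cdot x=x)$. Common Inverse Law $\mathsf{CIL}$: $\forall x\,(x\neq 0\wedge x\neq\bot\rightarrow x\cdot x^{-1}=1)$. *)

Record MdBot : Type := {
  car :> Type;
  zero : car;
  one : car;
  bot : car;
  add : car -> car -> car;
  mul : car -> car -> car;
  opp : car -> car;
  inv : car -> car;
  ax_addA : forall x y z, add (add x y) z = add x (add y z);
  ax_addC : forall x y, add x y = add y x;
  ax_add0 : forall x, add x zero = x;
  ax_addN : forall x, add x (opp x) = mul zero x;
  ax_mulA : forall x y z, mul (mul x y) z = mul x (mul y z);
  ax_mulC : forall x y, mul x y = mul y x;
  ax_mul1 : forall x, mul one x = x;
  ax_mulDr : forall x y z, mul x (add y z) = add (mul x y) (mul x z);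
  ax_oppK : forall x, opp (opp x) = x;
  ax_zero_sq : forall x, mul zero (mul x x) = mul zero x;
  ax_invK : forall x, inv (inv x) = add x (mul zero (inv x));
  ax_mulV : forall x, mul x (inv x) = add one (mul zero (inv x));
  ax_invM : forall x y, inv (mul x y) = mul (inv x) (inv y);
  ax_inv1 : inv one = one;
  ax_inv0 : inv zero = bot;
  ax_addbot : forall x, add x bot = bot;
  ax_mulbot : forall x, mul x bot = bot
}.

Arguments zero {m}.
Arguments one {m}.
Arguments bot {m}.
Arguments add {m} _ _.
Arguments mul {m} _ _.
Arguments opp {m} _.
Arguments inv {m} _.

Definition NVL (M : MdBot) : Prop :=
  forall x : M, x <> bot -> mul zero x = zero.

Definition AVL (M : MdBot) : Prop :=
  forall x : M, inv x = bot -> mul zero x = x.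

Definition CIL (M : MdBot) : Prop :=
  forall x : M, x <> zero /\ x <> bot -> mul x (inv x) = one.

From Stdlib Require Import Classical.

(* Under NVL the values [0 * x] for [x <> bot] all equal [0], so [0 * (x * y)]
   is [0] or [bot] according as [x * y] is; and [x * x^-1 = 1 + 0 * x^-1]
   collapses to [1] once [x^-1 <> bot].  Conversely CIL lets one write
   [0 * x = 0 * x * (x * x^-1) = 0 * (x * x) * x^-1 = 0 * x * x^-1 = 0 * 1]. *)

Section Basic.
Variable M : MdBot.

Lemma mul_bot_l (x : M) : mul bot x = bot.
Proof. rewrite ax_mulC. apply ax_mulbot. Qed.

Lemma all_bot_of_zero_eq_bot : (@zero M) = bot -> forall x : M, x = bot.
Proof. intros H x. rewrite <- (ax_add0 M x), H. apply ax_addbot. Qed.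

Lemma mul0_one : mul (@zero M) one = zero.
Proof. rewrite ax_mulC. apply ax_mul1. Qed.

Lemma mul0_zero : mul (@zero M) zero = zero.
Proof.
  assert (Hsum : add one (opp one) = (@zero M)) by (rewrite ax_addN; apply mul0_one).
  assert (Hopp : mul zero (opp one) = (@zero M)).
  { rewrite <- ax_addN, ax_oppK, ax_addC. exact Hsum. }
  rewrite <- Hsum at 2. rewrite ax_mulDr, mul0_one, Hopp. apply ax_add0.
Qed.

(* [bot = 0 * bot], so [bot^-1 = 0^-1 * bot^-1 = bot * bot^-1]. *)
Lemma inv_bot : inv (@bot M) = bot.
Proof.
  rewrite <- (ax_mulbot M zero) at 1.
  rewrite ax_invM, ax_inv0. apply mul_bot_l.
Qed.

End Basic.

Section NormalValueLaw.
Variables (M : MdBot) (nvl : NVL M).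

Lemma mul_eq_bot_r (x y : M) : mul x y = bot -> x <> bot -> y = bot.
Proof.
  intros Hxy Hx. apply NNPP. intros Hy. apply Hx.
  apply all_bot_of_zero_eq_bot.
  assert (H0 : mul zero (mul x y) = (@zero M)).
  { rewrite <- ax_mulA, (nvl x Hx). apply (nvl y Hy). }
  rewrite Hxy, ax_mulbot in H0. symmetry. exact H0.
Qed.

Lemma mul0_of_inv_neq_bot (x : M) : inv x <> bot -> mul zero x = zero.
Proof.
  intros Hi. apply nvl. intros Hx. apply Hi. rewrite Hx. apply inv_bot.
Qed.

Lemma CIL_of_NVL_AVL : AVL M -> CIL M.
Proof.
  intros avl x [Hx0 Hxb]. rewrite ax_mulV.
  destruct (classic (inv x = bot)) as [Hi | Hi].
  - exfalso. apply Hx0. rewrite <- (avl x Hi). apply nvl, Hxb.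
  - rewrite (nvl _ Hi). apply ax_add0.
Qed.

End NormalValueLaw.

Section CommonInverseLaw.
Variables (M : MdBot) (cil : CIL M).

Lemma NVL_of_CIL : NVL M.
Proof.
  intros x Hxb.
  destruct (classic (x = zero)) as [-> | Hx0]; [apply mul0_zero |].
  pose proof (cil x (conj Hx0 Hxb)) as HxV.
  assert (E : mul zero x = mul (mul zero x) (mul x (inv x))).
  { rewrite HxV, (ax_mulC _ (mul zero x) one). symmetry. apply ax_mul1. }
  rewrite E, <- ax_mulA, (ax_mulA _ zero x x), ax_zero_sq, ax_mulA, HxV.
  apply mul0_one.
Qed.

(* If [x] were neither [0] nor [bot], then [1 = x * x^-1 = x * bot = bot],
   whence [x = 1 * x = bot]. *)
Lemma AVL_of_CIL : AVL M.
Proof.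
  intros x Hi.
  destruct (classic (x = bot)) as [-> | Hxb]; [apply ax_mulbot |].
  destruct (classic (x = zero)) as [-> | Hx0]; [apply mul0_zero |].
  exfalso. pose proof (cil x (conj Hx0 Hxb)) as HxV.
  rewrite Hi, ax_mulbot in HxV.
  apply Hxb. rewrite <- (ax_mul1 M x), <- HxV. apply mul_bot_l.
Qed.

End CommonInverseLaw.

Theorem proposition2p6 :
  (forall M : MdBot, NVL M ->
     forall x y : M, mul x y = bot -> x <> bot -> y = bot) /\
  (forall M : MdBot, NVL M ->
     forall x : M, inv x <> bot -> mul zero x = zero) /\
  (forall M : MdBot, NVL M -> AVL M -> CIL M) /\
  (forall M : MdBot, CIL M -> NVL M) /\
  (forall M : MdBot, CIL M -> AVL M).
Proof.
  repeat split.
  - exact mul_eq_bot_r.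
  - exact mul0_of_inv_neq_bot.
  - exact CIL_of_NVL_AVL.
  - exact NVL_of_CIL.
  - exact AVL_of_CIL.
Qed.
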